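(* For $q=p^h$ with $p$ prime and $h\geq1$, $$d\big(C(PG(2,q))^\perp\big)\leq 2q+1-\frac{q-1}{p-1}.$$
   Context: $C(PG(2,q))$ is the $\mathbb{F}_p$-span of the incidence vectors of the lines of $PG(2,q)$, with coordinates indexed by points. $C^\perp$ is its dual with respect to the standard scalar product over $\mathbb{F}_p$. $d(\cdot)$ is the minimum nonzero weight. *)

From HB Require Import structures.
From mathcomp Require Import all_boot all_order all_algebra all_field.
Set Implicit Arguments. Unset Strict Implicit. Unset Printing Implicit Defensive.
Import GRing.Theory.
Local Open Scope ring_scope.

(* A point (resp. line) is a 1-dimensional subspace of F^3, represented by its
   unique normalized spanning vector: nonzero, first nonzero coordinate = 1. *)
Definition normalized (F : finFieldType) (x : 'rV[F]_3) : bool :=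
  [exists i : 'I_3, (x 0 i == 1) && [forall j : 'I_3, (j < i)%N ==> (x 0 j == 0)]].

Definition PGpt (F : finFieldType) := {x : 'rV[F]_3 | normalized x}.
Definition PGline (F : finFieldType) := {x : 'rV[F]_3 | normalized x}.

Definition incident (F : finFieldType) (x : PGpt F) (l : PGline F) : bool :=
  \sum_(i < 3) (val x) 0 i * (val l) 0 i == 0.

Notation word F p := {ffun PGpt F -> 'F_p}.

Definition inc_vec (F : finFieldType) (p : nat) (l : PGline F) : word F p :=
  [ffun x => (incident x l)%:R].

Definition code (F : finFieldType) (p : nat) : pred (word F p) :=
  fun c => [exists a : {ffun PGline F -> 'F_p}, c == [ffun x => \sum_(l : PGline F) a l * inc_vec p l x]].

Definition dotw (F : finFieldType) (p : nat) (c w : word F p) : 'F_p :=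
  \sum_(x : PGpt F) c x * w x.

Definition dual_code (F : finFieldType) (p : nat) (C : pred (word F p)) : pred (word F p) :=
  fun c => [forall w : word F p, (w \in C) ==> (dotw c w == 0)].

Definition wt (F : finFieldType) (p : nat) (c : word F p) : nat := #|[set x | c x != 0]|.

(* minimum nonzero weight; the empty minimum is #|points|.+1 (larger than any weight) *)
Definition min_weight (F : finFieldType) (p : nat) (C : pred (word F p)) : nat :=
  \big[minn/#|{: PGpt F}|.+1]_(c : word F p | (c \in C) && (c != 0)) wt c.

From HB Require Import structures.
From mathcomp Require Import all_boot all_order all_algebra all_field.
From mathcomp Require Import ring zify.
Set Implicit Arguments. Unset Strict Implicit. Unset Printing Implicit Defensive.
Import GRing.Theory.
Local Open Scope ring_scope.

(* The bound d(C(PG(2,q))^perp) <= 2q + 1 - (q-1)/(p-1), q = p^h, is witnessed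
   by an explicit word of the dual code.  Let S be the set of nonzero
   (p-1)-th powers of F = GF(q), a subgroup of F^* of order (q-1)/(p-1).  The
   word is +1 on the q affine points (1:x:x^p) of the curve y = x^p, and -1 on
   the points at infinity (0:1:s) with s outside S and on (0:0:1); its weight
   is q + (q - |S|) + 1.  It is orthogonal to every line: a line y = m x + e
   meets the curve in the roots of the additive polynomial x^p - m x - e,
   whose number is 0 or p when m is in S and exactly 1 otherwise, and its
   point at infinity (0:1:m) compensates; a vertical line meets the curve once
   and passes through (0:0:1); the line at infinity carries -(q - |S|) - 1,
   which vanishes modulo p since |S| = 1 + p + ... + p^(h-1). *)

Notation i0 := (@Ordinal 3 0 isT).
Notation i1 := (@Ordinal 3 1 isT).
Notation i2 := (@Ordinal 3 2 isT).

Lemma ord3P (P : 'I_3 -> Prop) : P i0 -> P i1 -> P i2 -> forall i, P i.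
Proof.
move=> P0 P1 P2 [[|[|[|//]]] lti].
- by rewrite (_ : Ordinal lti = i0) //; apply: val_inj.
- by rewrite (_ : Ordinal lti = i1) //; apply: val_inj.
- by rewrite (_ : Ordinal lti = i2) //; apply: val_inj.
Qed.

Lemma sum3 (R : nmodType) (f : 'I_3 -> R) : \sum_(i < 3) f i = f i0 + f i1 + f i2.
Proof.
by rewrite !big_ord_recr big_ord0 /= add0r; congr (f _ + f _ + f _); apply: val_inj.
Qed.

Definition row3 (R : nmodType) (a b c : R) : 'rV[R]_3 := \row_(i < 3) [:: a; b; c]`_i.

Lemma row3_0 (R : nmodType) (a b c : R) : row3 a b c 0 i0 = a. Proof. by rewrite mxE. Qed.
Lemma row3_1 (R : nmodType) (a b c : R) : row3 a b c 0 i1 = b. Proof. by rewrite mxE. Qed.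
Lemma row3_2 (R : nmodType) (a b c : R) : row3 a b c 0 i2 = c. Proof. by rewrite mxE. Qed.

Lemma normalizedE (F : finFieldType) (v : 'rV[F]_3) : normalized v =
  [|| v 0 i0 == 1, (v 0 i0 == 0) && (v 0 i1 == 1) |
      [&& v 0 i0 == 0, v 0 i1 == 0 & v 0 i2 == 1]].
Proof.
apply/existsP/idP.
- case=> i /andP[vi1 /forallP v0]; move: i vi1 v0.
  apply: ord3P => vi1 v0; rewrite vi1 ?orbT //.
  + by move: (v0 i0) => /= v00; rewrite v00 orbT.
  + by move: (v0 i0) (v0 i1) => /= v00 v10; rewrite v00 v10 !orbT.
- case/or3P => [v01 | /andP[v00 v11] | /and3P[v00 v10 v21]].
  + by exists i0; rewrite v01; apply/forallP; apply: ord3P.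
  + by exists i1; rewrite v11; apply/forallP; apply: ord3P.
  + by exists i2; rewrite v21; apply/forallP; apply: ord3P; rewrite ?v00 ?v10.
Qed.

Section Charts.
Variable F : finFieldType.

(* PG(2,F) is the disjoint union of the affine plane of points (1:x:y), the
   points (0:1:s) at infinity of the lines of slope s, and the point (0:0:1)
   at infinity of the vertical lines. *)
Lemma normalized_affine (x y : F) : normalized (row3 1 x y).
Proof. by rewrite normalizedE row3_0 eqxx. Qed.
Lemma normalized_slope (s : F) : normalized (row3 0 1 s).
Proof. by rewrite normalizedE row3_0 row3_1 !eqxx orbT. Qed.
Lemma normalized_vertical : normalized (row3 0 0 (1 : F)).
Proof. by rewrite normalizedE row3_0 row3_1 row3_2 !eqxx !orbT. Qed.

Definition affine_pt (x y : F) : PGpt F := Sub _ (normalized_affine x y).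
Definition slope_pt (s : F) : PGpt F := Sub _ (normalized_slope s).
Definition vertical_pt : PGpt F := Sub _ normalized_vertical.

Definition chart_type := ((F * F) + (F + unit))%type.

Definition pt_of_chart (t : chart_type) : PGpt F :=
  match t with
  | inl (x, y) => affine_pt x y
  | inr (inl s) => slope_pt s
  | inr (inr _) => vertical_pt
  end.

Definition chart_of (P : PGpt F) : chart_type :=
  let v := val P in
  if v 0 i0 == 1 then inl (v 0 i1, v 0 i2)
  else if v 0 i1 == 1 then inr (inl (v 0 i2)) else inr (inr tt).

Lemma pt_of_chartK : cancel pt_of_chart chart_of.
Proof.
have nz01 : (0 == 1 :> F) = false by rewrite eq_sym oner_eq0.
by case=> [[x y]|[s|[]]]; rewrite /chart_of /= ?row3_0 ?row3_1 ?row3_2 ?nz01 ?eqxx.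
Qed.

Lemma chart_ofK : cancel chart_of pt_of_chart.
Proof.
move=> P; apply: val_inj; have := valP P; rewrite normalizedE /chart_of.
have nz01 : (0 == 1 :> F) = false by rewrite eq_sym oner_eq0.
case/or3P => [v01 | /andP[/eqP v00 v11] | /and3P[/eqP v00 /eqP v10 /eqP v21]].
- rewrite v01; apply/rowP; apply: ord3P;
  by rewrite /= ?row3_0 ?row3_1 ?row3_2 ?(eqP v01).
- rewrite v00 nz01 v11; apply/rowP; apply: ord3P;
  by rewrite /= ?row3_0 ?row3_1 ?row3_2 ?(eqP v11).
- by rewrite v00 v10 nz01; apply/rowP; apply: ord3P; rewrite /= ?row3_0 ?row3_1 ?row3_2.
Qed.

Lemma big_PGpt (R : Type) (idx : R) (op : Monoid.com_law idx) (phi : PGpt F -> R) :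
  \big[op/idx]_(P : PGpt F) phi P =
  op (\big[op/idx]_(x : F) \big[op/idx]_(y : F) phi (affine_pt x y))
     (op (\big[op/idx]_(s : F) phi (slope_pt s)) (phi vertical_pt)).
Proof.
rewrite (reindex pt_of_chart); last first.
  by apply: onW_bij; exists chart_of; [exact: pt_of_chartK | exact: chart_ofK].
rewrite !big_sumType pair_big /=; congr (op _ (op _ _)).
- by apply: eq_bigr => -[].
- by rewrite (big_pred1 tt) // => -[].
Qed.

Lemma incident_affine (x y : F) (l : PGline F) :
  incident (affine_pt x y) l = (val l 0 i0 + x * val l 0 i1 + y * val l 0 i2 == 0).
Proof. by rewrite /incident sum3 /= row3_0 row3_1 row3_2 mul1r. Qed.
Lemma incident_slope (s : F) (l : PGline F) :
  incident (slope_pt s) l = (val l 0 i1 + s * val l 0 i2 == 0).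
Proof. by rewrite /incident sum3 /= row3_0 row3_1 row3_2 mul1r mul0r add0r. Qed.
Lemma incident_vertical (l : PGline F) : incident vertical_pt l = (val l 0 i2 == 0).
Proof. by rewrite /incident sum3 /= row3_0 row3_1 row3_2 mul1r !mul0r !add0r. Qed.

Lemma line_coords_neq0 (l : PGline F) :
  [|| val l 0 i0 != 0, val l 0 i1 != 0 | val l 0 i2 != 0].
Proof.
have := valP l; rewrite normalizedE.
by case/or3P => [/eqP-> | /andP[_ /eqP->] | /and3P[_ _ /eqP->]]; rewrite oner_eq0 ?orbT.
Qed.

End Charts.

(* The nonempty fibers of an additive map are cosets of its kernel. *)
Lemma card_fiber_additive (V : finZmodType) (W : zmodType) (g : V -> W)
    (gB : {morph g : x y / x - y}) (x0 : V) :
  #|[set x | g x == g x0]| = #|[set x | g x == 0]|.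
Proof.
have -> : [set x | g x == g x0] = (fun k => k + x0) @: [set x | g x == 0].
  apply/setP => x; rewrite inE; apply/idP/imsetP => [/eqP gx | [k]].
    by exists (x - x0); rewrite ?subrK // inE gB gx subrr.
  by rewrite inE => /eqP gk ->; rewrite -subr_eq0 -gB addrK gk.
by rewrite (card_imset _ (addIr x0)).
Qed.

Definition nz_power (F : finFieldType) (n : nat) (m : F) : bool :=
  [exists a : F, (a != 0) && (m == a ^+ n)].

Section AdditivePolynomials.
Variables (F : finFieldType) (p : nat).
Hypothesis charFp : p \in [pchar F].

Let p_prime : prime p := pcharf_prime charFp.
Let p_gt0 : (0 < p)%N := prime_gt0 p_prime.

Let expS_pred (x : F) : x ^+ p = x ^+ p.-1 * x.
Proof. by rewrite -exprSr prednK. Qed.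

Lemma natr_inj_pchar (i j : nat) :
  (i < p)%N -> (j < p)%N -> (i%:R : F) = j%:R -> i = j.
Proof.
wlog le_ij : i j / (i <= j)%N.
  move=> W lt_i lt_j eq_ij; case: (leqP i j) => [le_ij | /ltnW le_ji].
    exact: W.
  exact/esym/W.
move=> _ lt_j /eqP; rewrite eq_sym -subr_eq0 -natrB // -(dvdn_pcharf charFp).
rewrite /dvdn modn_small; last by apply: leq_ltn_trans lt_j; exact: leq_subr.
by rewrite subn_eq0 => ge_ij; apply/eqP; rewrite eqn_leq le_ij.
Qed.

(* The fixed field of the Frobenius map is the prime field: it has p elements,
   at most as the roots of X^p - X, at least as the images of 0, ..., p-1. *)
Lemma card_frobenius_fixed : #|[set y : F | y ^+ p == y]| = p.
Proof.
apply/eqP; rewrite eqn_leq; apply/andP; split.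
  have lt1p : (1 < p)%N := prime_gt1 p_prime.
  have sizeXpX : size ('X^p - 'X : {poly F}) = p.+1.
    by rewrite size_polyDl ?size_polyXn // size_polyN size_polyX ltnS.
  have nzXpX : ('X^p - 'X : {poly F}) != 0 by rewrite -size_poly_eq0 sizeXpX.
  rewrite cardE -ltnS -sizeXpX; apply: max_poly_roots nzXpX _ (enum_uniq _).
  by apply/allP => y; rewrite mem_enum inE /root !hornerE subr_eq0.
pose natF (i : 'I_p) : F := (i : nat)%:R.
have natF_inj : injective natF.
  by move=> i j /(natr_inj_pchar (ltn_ord i) (ltn_ord j)) /val_inj.
rewrite -[p in (p <= _)%N]card_ord -cardsT -(card_imset _ natF_inj).
apply: subset_leq_card; apply/subsetP => _ /imsetP[i _ ->].
by rewrite inE -(pFrobenius_autE charFp) pFrobenius_aut_nat.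
Qed.

(* The kernel of x |-> x^p - m x has p elements when m is a nonzero
   (p-1)-th power a^(p-1) (it is then a times the prime field), and is
   trivial otherwise. *)
Lemma card_additive_kernel (m : F) :
  #|[set x : F | x ^+ p == m * x]| = if nz_power p.-1 m then p else 1%N.
Proof.
case: ifPn => [/existsP[a /andP[nz_a /eqP->]] | not_power].
  have -> : [set x | x ^+ p == a ^+ p.-1 * x] = ( *%R a) @: [set y | y ^+ p == y].
    apply/setP => x; rewrite inE; apply/idP/imsetP => [/eqP xp | [y]].
      exists (x / a); last by rewrite mulrC divfK.
      rewrite inE expr_div_n xp expS_pred; apply/eqP; field.
      by rewrite nz_a expf_neq0.
    by rewrite inE => /eqP yp ->; rewrite exprMn yp expS_pred mulrA.
  by rewrite card_imset ?card_frobenius_fixed //; exact: mulfI.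
rewrite (_ : [set x | _] = [set 0]) ?cards1 //; apply/setP => x; rewrite !inE.
apply/idP/eqP => [xp | ->]; last by rewrite expr0n eqn0Ngt p_gt0 mulr0.
apply: contraNeq not_power => nz_x; apply/existsP; exists x; rewrite nz_x /=.
by rewrite -(inj_eq (mulIf nz_x)) -expS_pred eq_sym.
Qed.

(* Number of roots of x^p = m x + b, modulo p: it vanishes when m is a
   nonzero (p-1)-th power (the roots form a coset of a kernel of order p, or
   none at all) and is 1 otherwise (x |-> x^p - m x is then bijective). *)
Lemma card_roots_additive_mod (m b : F) :
  (#|[set x : F | x ^+ p == m * x + b]|%:R : 'F_p) = (~~ nz_power p.-1 m)%:R.
Proof.
pose g (x : F) := x ^+ p - m * x.
have gB : {morph g : x y / x - y}.
  by move=> x y; rewrite /g -!(pFrobenius_autE charFp) rmorphB /=; ring.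
have -> : [set x | x ^+ p == m * x + b] = [set x | g x == b].
  by apply/setP => x; rewrite !inE /g subr_eq addrC.
have kerE : [set x | g x == 0] = [set x | x ^+ p == m * x].
  by apply/setP => x; rewrite !inE subr_eq0.
have [x0 /eqP <- | no_root] := pickP [pred x | g x == b].
  rewrite card_fiber_additive // kerE card_additive_kernel.
  by case: ifP; rewrite ?pchar_Fp_0.
suff -> : nz_power p.-1 m.
  rewrite (_ : [set x | _] = set0) ?cards0 //.
  by apply/setP => x; rewrite !inE; exact: no_root.
apply: contraT => not_power.
have ker0 : [set x | g x == 0] = [set 0].
  have g0 : 0 \in [set x | g x == 0] by rewrite inE /g expr0n eqn0Ngt p_gt0 mulr0 subr0.
  have := card_additive_kernel m; rewrite (negbTE not_power) -kerE => /eqP/cards1P[z kerz].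
  by move: g0; rewrite kerz inE => /eqP <-.
have g_inj : injective g.
  by move=> x y gxy; apply/eqP; rewrite -subr_eq0 -in_set1 -ker0 inE gB gxy subrr.
have /codomP[x gx] := injF_onto g_inj b.
by have := no_root x; rewrite /= gx eqxx.
Qed.

(* x |-> x^(p-1) maps F^* onto the nonzero (p-1)-th powers, each fiber being
   the kernel above minus 0; hence |S| (p-1) = |F| - 1. *)
Lemma card_nz_powers : (#|[set m : F | nz_power p.-1 m]| * p.-1 = #|F|.-1)%N.
Proof.
rewrite -(cardC1 (0 : F)) -sum_nat_cond_const -sum1_card.
rewrite [RHS](partition_big (fun x : F => x ^+ p.-1) (nz_power p.-1)); last first.
  by move=> x nz_x; apply/existsP; exists x; rewrite eqxx andbT.
apply: eq_bigr => m Sm; rewrite sum1dep_card.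
have := cardsD1 0 [set x : F | x ^+ p == m * x].
rewrite card_additive_kernel Sm inE expr0n eqn0Ngt p_gt0 mulr0 eqxx add1n.
move=> /(congr1 predn)/= E; rewrite {1}E.
apply: eq_card => x; rewrite !inE; case: eqVneq => //= nz_x.
by rewrite expS_pred (inj_eq (mulIf nz_x)).
Qed.

End AdditivePolynomials.

Lemma sum_indicator (T : finType) (R : nzRingType) (P : pred T) :
  \sum_x (P x)%:R = #|[set x | P x]|%:R :> R.
Proof.
rewrite -sum1_card natr_sum [RHS]big_mkcond; apply: eq_bigr => x _.
by rewrite inE; case: (P x).
Qed.

Lemma card_set_sum (T : finType) (P : pred T) : #|[set x | P x]| = (\sum_x P x)%N.
Proof. by rewrite -sum1_card big_mkcond; apply: eq_bigr => x _; rewrite inE; case: (P x). Qed.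

Lemma sum_delta (T : finType) (R : nzRingType) (a : T) (f : T -> R) :
  \sum_y (y == a)%:R * f y = f a.
Proof.
rewrite (bigD1 a) //= eqxx mul1r big1 ?addr0 // => y /negbTE->.
by rewrite mul0r.
Qed.

Lemma natr_pred_pchar (R : nzRingType) (p n : nat) :
  p \in [pchar R] -> (p %| n)%N -> (0 < n)%N -> n.-1%:R = -1 :> R.
Proof.
move=> charRp dvd_pn n_gt0; apply/eqP; rewrite -subr_eq0 opprK natr1 prednK //.
by rewrite -(dvdn_pcharf charRp).
Qed.

Section CurveWord.
Variables (F : finFieldType) (p : nat).
Hypotheses (charFp : p \in [pchar F]) (dvd_p_F : (p %| #|F|)%N).

Let p_prime : prime p := pcharf_prime charFp.

Local Notation S := [set m : F | nz_power p.-1 m].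

(* |S| = (|F| - 1)/(p - 1) = 1 + p + ... + p^(h-1) is 1 modulo p. *)
Lemma card_nz_powers_mod : #|S|%:R = 1 :> 'F_p.
Proof.
have charFp_p := pchar_Fp p_prime.
have := congr1 (fun n => n%:R : 'F_p) (card_nz_powers charFp) => /=.
rewrite natrM (natr_pred_pchar charFp_p (dvdnn p) (prime_gt0 p_prime)).
rewrite (natr_pred_pchar charFp_p dvd_p_F (ltnW (finNzRing_gt1 F))).
by rewrite mulrN1 => /oppr_inj.
Qed.

Lemma card_non_powers_mod : #|~: S|%:R = -1 :> 'F_p.
Proof.
have card_F0 : #|F|%:R = 0 :> 'F_p.
  by apply/eqP; rewrite -(dvdn_pcharf (pchar_Fp p_prime)).
move: (cardsC S) => /(congr1 (fun n => n%:R : 'F_p)).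
by rewrite natrD card_nz_powers_mod card_F0 addrC => /eqP; rewrite addr_eq0 => /eqP.
Qed.

Definition curve_word : word F p := [ffun P =>
  match chart_of P with
  | inl (x, y) => (y == x ^+ p)%:R
  | inr (inl s) => - (~~ nz_power p.-1 s)%:R
  | inr (inr _) => -1
  end].

Lemma curve_word_affine (x y : F) : curve_word (affine_pt x y) = (y == x ^+ p)%:R.
Proof. by rewrite ffunE (pt_of_chartK (inl (x, y))). Qed.
Lemma curve_word_slope (s : F) : curve_word (slope_pt s) = - (~~ nz_power p.-1 s)%:R.
Proof. by rewrite ffunE (pt_of_chartK (inr (inl s))). Qed.
Lemma curve_word_vertical : curve_word (vertical_pt F) = -1.
Proof. by rewrite ffunE (pt_of_chartK (inr (inr tt))). Qed.

Definition curve_line_sum (a b c : F) : 'F_p :=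
  \sum_x (a + x * b + x ^+ p * c == 0)%:R
  - \sum_s (~~ nz_power p.-1 s)%:R * (b + s * c == 0)%:R - (c == 0)%:R.

Lemma dotw_curve_word (l : PGline F) :
  dotw curve_word (inc_vec p l) = curve_line_sum (val l 0 i0) (val l 0 i1) (val l 0 i2).
Proof.
rewrite /dotw (big_PGpt _ (fun P => curve_word P * inc_vec p l P)) /=.
rewrite curve_word_vertical /inc_vec ffunE incident_vertical mulN1r.
under eq_bigr => x _ do under eq_bigr => y _ do
  rewrite curve_word_affine ffunE incident_affine.
under [X in _ + (X + _)]eq_bigr => s _ do
  rewrite curve_word_slope ffunE incident_slope mulNr.
under eq_bigr => x _ do rewrite (sum_delta (x ^+ p)
  (fun y => (val l 0 i0 + x * val l 0 i1 + y * val l 0 i2 == 0)%:R)).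
by rewrite sumrN addrA.
Qed.

(* A line y = m x + e meets
   the curve in a number of points congruent to [m outside S] modulo p, which
   its point at infinity (0:1:m) compensates; a vertical line meets the curve
   once and passes through (0:0:1); the line at infinity carries
   -(|F| - |S|) - 1 = 0 modulo p. *)
Lemma curve_line_sum_eq0 (a b c : F) :
  [|| a != 0, b != 0 | c != 0] -> curve_line_sum a b c = 0.
Proof.
rewrite /curve_line_sum; have [-> | nz_c] := eqVneq c 0; last first.
  move=> _; pose m := - b / c; pose e := - a / c.
  have on_line x y : (a + x * b + y * c == 0) = (y == m * x + e).
    have -> : a + x * b + y * c = (y - (m * x + e)) * c by rewrite /m /e; field.
    by rewrite mulf_eq0 (negbTE nz_c) orbF subr_eq0.
  have slope_on_line s : (b + s * c == 0) = (s == m).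
    have -> : b + s * c = (s - m) * c by rewrite /m; field.
    by rewrite mulf_eq0 (negbTE nz_c) orbF subr_eq0.
  under eq_bigr do rewrite on_line.
  under [X in _ - X - _]eq_bigr do rewrite slope_on_line mulrC.
  by rewrite sum_indicator (card_roots_additive_mod charFp) sum_delta subrr sub0r oppr0.
rewrite /= orbF => nz_ab.
under eq_bigr do rewrite mulr0 addr0.
under [X in _ - X - _]eq_bigr do rewrite mulr0 addr0.
have [b0 | nz_b] := eqVneq b 0.
  rewrite b0 eqxx orbF in nz_ab.
  rewrite b0; under eq_bigr do rewrite mulr0 addr0 (negbTE nz_ab).
  under [X in _ - X - _]eq_bigr do rewrite mulr1.
  rewrite big1 // sub0r sum_indicator.
  have -> : [set x | ~~ nz_power p.-1 x] = ~: S by apply/setP => x; rewrite !inE.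
  by rewrite card_non_powers_mod opprK subrr.
have root_x x : (a + x * b == 0) = (x == - a / b).
  have -> : a + x * b = (x - - a / b) * b by field.
  by rewrite mulf_eq0 (negbTE nz_b) orbF subr_eq0.
under eq_bigr do rewrite root_x -[_%:R]mulr1.
by rewrite sum_delta big1 ?subr0 ?subrr // => s _; rewrite mulr0n mulr0.
Qed.

Lemma curve_word_in_dual : curve_word \in dual_code (@code F p).
Proof.
rewrite unfold_in; apply/forallP => w; apply/implyP.
rewrite unfold_in => /existsP[coef /eqP->]; apply/eqP.
rewrite /dotw; under eq_bigr do rewrite [X in _ * X]ffunE mulr_sumr.
rewrite exchange_big big1 // => l _; under eq_bigr do rewrite mulrCA.
rewrite -mulr_sumr -[\sum_P _]/(dotw curve_word (inc_vec p l)) dotw_curve_word.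
by rewrite curve_line_sum_eq0 ?mulr0 // line_coords_neq0.
Qed.

Lemma wt_curve_word : wt curve_word = (#|F| + (#|F| - #|S|) + 1)%N.
Proof.
have natr_neq0 (b : bool) : ((b%:R : 'F_p) != 0) = b by case: b; rewrite ?eqxx ?oner_eq0.
rewrite /wt card_set_sum (big_PGpt _ (fun P => (curve_word P != 0 : nat))) /=.
rewrite curve_word_vertical oppr_eq0 oner_eq0 /= addnA.
under eq_bigr do under eq_bigr do rewrite curve_word_affine natr_neq0.
under [X in (_ + X + _)%N]eq_bigr do rewrite curve_word_slope oppr_eq0 natr_neq0.
rewrite -card_set_sum (_ : [set s | ~~ _] = ~: S); last by apply/setP => s; rewrite !inE.
rewrite cardsCs setCK; congr (_ + _ + _)%N.
under eq_bigr do rewrite -card_set_sum cardsE card1.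
by rewrite sum1_card.
Qed.

Lemma curve_word_neq0 : curve_word != 0.
Proof.
apply/eqP => /(congr1 (fun c : word F p => c (affine_pt 0 0))).
by rewrite curve_word_affine ffunE expr0n eqn0Ngt prime_gt0 // eqxx => /eqP; rewrite oner_eq0.
Qed.

End CurveWord.

Lemma min_weight_le (F : finFieldType) (p : nat) (C : pred (word F p)) (c : word F p) :
  c \in C -> c != 0 -> (min_weight C <= wt c)%N.
Proof.
move=> Cc nz_c; rewrite /min_weight -minEnat.
by apply: (@Order.TotalTheory.bigmin_le_cond _ nat); rewrite Cc.
Qed.

Local Close Scope ring_scope.

(* With q = p^h, curve_word is a nonzero word of C^perp of weight
   2q + 1 - |S|, and |S| (p - 1) = q - 1. *)
Theorem mainTheorem19 (F : finFieldType) (p h : nat) :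
  prime p -> (0 < h)%N -> #|F| = (p ^ h)%N ->
  (min_weight (dual_code (@code F p)) <=
     (2 * (p ^ h) + 1) - ((p ^ h) - 1) %/ (p - 1))%N.
Proof.
move=> p_prime h_gt0 card_F.
have charFp : (p \in [pchar F])%R := card_finPcharP card_F p_prime.
have dvd_p_F : p %| #|F| by rewrite card_F -(prednK h_gt0) expnS dvdn_mulr.
set S := [set m : F | nz_power p.-1 m].
have card_S : (p ^ h - 1) %/ (p - 1) = #|S|.
  by rewrite -card_F !subn1 -(card_nz_powers charFp) mulnK // -subn1 subn_gt0 prime_gt1.
have := min_weight_le (curve_word_in_dual charFp dvd_p_F) (curve_word_neq0 charFp).
rewrite wt_curve_word -/S card_S -card_F.
have le_S_F : #|S| <= #|F| := max_card S.
lia.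
Qed.
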